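(* Let $\mathbf{M}^*\in\mathbb{R}^{d_1\times d_2}$ have rank $r$, let $f(\mathbf{U},\mathbf{V})=\frac12\|\mathbf{U}\mathbf{V}^\top-\mathbf{M}^*\|_F^2$ for $\mathbf{U}\in\mathbb{R}^{d_1\times r}$, $\mathbf{V}\in\mathbb{R}^{d_2\times r}$, and let $\epsilon>0$. Suppose $(\mathbf{U},\mathbf{V})$ is a stationary point of $f$ such that $\|\mathbf{U}^\top\mathbf{U}-\mathbf{V}^\top\mathbf{V}\|_F\le\epsilon$. Then either $\|\mathbf{U}\mathbf{V}^\top-\mathbf{M}^*\|_F\le\epsilon$, or $(\mathbf{U},\mathbf{V})$ is a strict saddle point of $f$.
   Context: A stationary point is a point where the gradient of $f$ vanishes. A saddle point of $f$ is strict if the Hessian of $f$ at that point has a negative eigenvalue. $\|\cdot\|_F$ is the Frobenius norm. *)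

From HB Require Import structures.
From mathcomp Require Import all_boot all_order all_algebra.
From mathcomp Require Import all_classical all_reals all_analysis.
Set Implicit Arguments. Unset Strict Implicit. Unset Printing Implicit Defensive.
Import Order.TTheory GRing.Theory Num.Theory.
Local Open Scope ring_scope.

Section Defs.
Variable R : realType.

Definition frob m n (A : 'M[R]_(m, n)) : R :=
  Num.sqrt (\sum_(i < m) \sum_(j < n) A i j ^+ 2).

Definition ebasis N (i : 'I_N) : 'rV[R]_N := delta_mx 0 i.

Definition pderiv N (g : 'rV[R]_N -> R) (x : 'rV[R]_N) (i : 'I_N) : R :=
  derive1 (fun t : R => g (x + t *: ebasis i)) 0.

Definition gradient N (g : 'rV[R]_N -> R) (x : 'rV[R]_N) : 'rV[R]_N :=
  \row_i pderiv g x i.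

Definition hessian N (g : 'rV[R]_N -> R) (x : 'rV[R]_N) : 'M[R]_N :=
  \matrix_(i, j) pderiv (fun y => pderiv g y i) x j.

Definition stationary_point N (g : 'rV[R]_N -> R) (x : 'rV[R]_N) : Prop :=
  gradient g x = 0.

Definition strict_saddle N (g : 'rV[R]_N -> R) (x : 'rV[R]_N) : Prop :=
  stationary_point g x /\ exists lam : R, lam < 0 /\ eigenvalue (hessian g x) lam.

(* The point (U, V) is encoded as a single vector of R^(d1*r + d2*r):
   x = [mxvec U | mxvec V]. *)
Definition Uof d1 d2 r (x : 'rV[R]_(d1 * r + d2 * r)) : 'M[R]_(d1, r) :=
  vec_mx (lsubmx x).
Definition Vof d1 d2 r (x : 'rV[R]_(d1 * r + d2 * r)) : 'M[R]_(d2, r) :=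
  vec_mx (rsubmx x).
Definition pack d1 d2 r (U : 'M[R]_(d1, r)) (V : 'M[R]_(d2, r))
  : 'rV[R]_(d1 * r + d2 * r) := row_mx (mxvec U) (mxvec V).

Definition fobj d1 d2 r (Mstar : 'M[R]_(d1, d2))
  (x : 'rV[R]_(d1 * r + d2 * r)) : R :=
  2^-1 * frob (@Uof d1 d2 r x *m (@Vof d1 d2 r x)^T - Mstar) ^+ 2.

End Defs.

(* At a stationary point the residual E = U V^T - M* satisfies E V = 0 and
   U^T E = 0.  If U and V both have rank r = rank M*, then U = M* V (V^T V)^-1,
   so U and M* have the same column space; the columns of E lie in it and are
   orthogonal to it, hence E = 0.  Otherwise some a <> 0 has U a = 0 (the case
   V a = 0 follows by transposition); if E_kl <> 0, the Hessian quadratic form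
   in the direction (s e_k a^T, e_l a^T) is 2 s |a|^2 E_kl + s^2 |e_k a^T V^T|^2,
   which is negative for a suitable s, and a symmetric matrix taking a negative
   quadratic value has a negative eigenvalue. *)

From HB Require Import structures.
From mathcomp Require Import all_boot all_order all_algebra.
From mathcomp Require Import all_classical all_reals all_analysis.
From mathcomp Require Import ring lra complex sesquilinear spectral.
Import Order.TTheory GRing.Theory Num.Theory.
Set Implicit Arguments. Unset Strict Implicit. Unset Printing Implicit Defensive.
Local Open Scope ring_scope.

Section Spectrum.
Local Open Scope sesquilinear_scope.

Section NormalSpectrum.
Variables (C : numClosedFieldType) (n : nat) (A : 'M[C]_n).
Hypothesis A_normal : A \is normalmx.

Lemma eigenvalue_spectral_diag i : eigenvalue A (spectral_diag A 0 i).
Proof.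
have /orthomx_spectralP := A_normal.
set P := spectralmx A; set D := spectral_diag A => A_diag.
apply/eigenvalueP; exists (row i P).
  have : P *m A = diag_mx D *m P.
    by rewrite [in LHS]A_diag !mulmxA mulmxV ?spectral_unit // mul1mx.
  move/(congr1 (row i)); rewrite row_mul mul_diag_mx => ->.
  by apply/rowP => j; rewrite !mxE.
rewrite rowE mulmx_free_eq0 ?row_free_unit ?spectral_unit //.
by apply/eqP => /matrixP/(_ 0 i)/eqP; rewrite !mxE !eqxx oner_eq0.
Qed.

Lemma spectral_form_ge0 (v : 'rV[C]_n) :
  (forall i, 0 <= spectral_diag A 0 i) -> 0 <= (v *m A *m v ^t*) 0 0.
Proof.
have /orthomx_spectralP := A_normal.
set P := spectralmx A; set D := spectral_diag A => -> D_ge0.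
rewrite invmx_unitary ?spectral_unitarymx //; set y := v *m P ^t*.
have -> : v *m (P ^t* *m diag_mx D *m P) *m v ^t* = y *m diag_mx D *m y ^t*.
  by rewrite /y !trmx_mul !map_mxM trmxCK !mulmxA.
rewrite mul_mx_diag mxE; apply: sumr_ge0 => j _; rewrite !mxE mulrAC.
by apply: mulr_ge0; [exact: mul_conjC_ge0 | exact: D_ge0].
Qed.

End NormalSpectrum.

Lemma symmetric_form_lt0_eigenvalue (R : rcfType) n (H : 'M[R]_n) (w : 'rV[R]_n) :
  H^T = H -> (w *m H *m w^T) 0 0 < 0 -> exists lam, lam < 0 /\ eigenvalue H lam.
Proof.
move=> H_sym w_neg; pose toC := real_complex R; pose Hc := map_mx toC H.
have toC_real x : toC x \is Num.real by apply/complex_realP; exists x.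
have Hc_herm : Hc \is hermsymmx.
  apply: realsym_hermsym; last by apply/mxOverP => i j; rewrite mxE.
  by apply/is_hermitianmxP; rewrite expr0 scale1r map_mx_id // /Hc map_trmx H_sym.
have D_re i : toC (complex.Re (spectral_diag Hc 0 i)) = spectral_diag Hc 0 i.
  exact/RRe_real/mxOverP/hermitian_spectral_diag_real.
have [[i lt_i0] | D_ge0] := pselect (exists i, complex.Re (spectral_diag Hc 0 i) < 0).
  exists (complex.Re (spectral_diag Hc 0 i)); split => //.
  have := eigenvalue_spectral_diag (hermitian_normalmx Hc_herm) i.
  by rewrite -D_re eigenvalue_map.
suff : 0 <= toC ((w *m H *m w^T) 0 0) by rewrite ler0c leNgt w_neg.
have -> : toC ((w *m H *m w^T) 0 0) = (map_mx toC w *m Hc *m (map_mx toC w) ^t* ) 0 0.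
  transitivity ((map_mx toC (w *m H *m w^T)) 0 0); first by rewrite [RHS]mxE.
  rewrite !map_mxM -map_trmx; congr ((_ *m _ *m _) _ _).
  by apply/matrixP => i j; rewrite !mxE conj_Creal.
apply: (spectral_form_ge0 (hermitian_normalmx Hc_herm)) => i.
by rewrite -D_re ler0c leNgt; apply/negP => lt_i0; apply: D_ge0; exists i.
Qed.

End Spectrum.

Section FrobeniusProduct.
Variable R : realType.

Definition frobdot m n (A B : 'M[R]_(m, n)) : R := \tr (A *m B^T).

Variables m n : nat.
Implicit Types A B C : 'M[R]_(m, n).

Lemma frobdotE A B : frobdot A B = \sum_i \sum_j A i j * B i j.
Proof. by apply: eq_bigr => i _; rewrite mxE; apply: eq_bigr => j _; rewrite mxE. Qed.

Lemma frobdotC A B : frobdot A B = frobdot B A.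
Proof. by rewrite /frobdot -mxtrace_tr trmx_mul trmxK. Qed.

Lemma frobdot_tr A B : frobdot A^T B^T = frobdot A B.
Proof. by rewrite {1}/frobdot trmxK mxtrace_mulC frobdotC. Qed.

Lemma frobdotDl A B C : frobdot (A + B) C = frobdot A C + frobdot B C.
Proof. by rewrite /frobdot mulmxDl mxtraceD. Qed.

Lemma frobdotZl c A B : frobdot (c *: A) B = c * frobdot A B.
Proof. by rewrite /frobdot -scalemxAl mxtraceZ. Qed.

Lemma frobdotDr A B C : frobdot A (B + C) = frobdot A B + frobdot A C.
Proof. by rewrite frobdotC frobdotDl !(frobdotC A). Qed.

Lemma frobdotZr c A B : frobdot A (c *: B) = c * frobdot A B.
Proof. by rewrite frobdotC frobdotZl frobdotC. Qed.

Lemma frobdot_mulr p (A : 'M[R]_(m, p)) (X : 'M[R]_(m, n)) (Y : 'M[R]_(n, p)) :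
  frobdot A (X *m Y) = frobdot (A *m Y^T) X.
Proof. by rewrite /frobdot trmx_mul mulmxA. Qed.

Lemma frobdot_mull p (A : 'M[R]_(m, p)) (X : 'M[R]_(m, n)) (Y : 'M[R]_(n, p)) :
  frobdot A (X *m Y) = frobdot (X^T *m A) Y.
Proof. by rewrite /frobdot trmx_mul mulmxA mxtrace_mulC mulmxA. Qed.

Lemma frobdot_ge0 A : 0 <= frobdot A A.
Proof. by rewrite frobdotE; do 2!(apply: sumr_ge0 => ? _); rewrite -expr2 sqr_ge0. Qed.

Lemma frobdot_eq0 A : (frobdot A A == 0) = (A == 0).
Proof.
apply/idP/eqP => [|->]; last by rewrite /frobdot mul0mx mxtrace0.
rewrite frobdotE psumr_eq0 => [/allP A0|i _]; last first.
  by apply: sumr_ge0 => j _; rewrite -expr2 sqr_ge0.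
apply/matrixP => i j; move/(_ i (mem_index_enum _)): A0.
rewrite psumr_eq0 => [/allP/(_ j (mem_index_enum _))|k _]; last by rewrite -expr2 sqr_ge0.
by rewrite mulf_eq0 orbb mxE => /eqP.
Qed.

Lemma frob0 : frob (0 : 'M[R]_(m, n)) = 0.
Proof.
by rewrite /frob big1 ?sqrtr0 // => i _; rewrite big1 // => j _; rewrite mxE expr0n.
Qed.

Lemma frob_sqr A : frob A ^+ 2 = frobdot A A.
Proof.
rewrite sqr_sqrtr ?frobdotE; last by do 2!(apply: sumr_ge0 => ? _); exact: sqr_ge0.
by apply: eq_bigr => i _; apply: eq_bigr => j _; rewrite expr2.
Qed.

Lemma frobdot_delta A i j : frobdot A (delta_mx i j) = A i j.
Proof.
rewrite frobdotE (bigD1 i) //= (bigD1 j) //= !mxE !eqxx mulr1.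
rewrite big1 ?addr0 => [|k /negbTE kj]; last by rewrite mxE kj andbF mulr0.
rewrite big1 ?addr0 // => k /negbTE ki.
by rewrite big1 // => l _; rewrite mxE ki mulr0.
Qed.

End FrobeniusProduct.

Section QuadraticPath.
Variable R : realType.

Lemma derive1_horner0 (p : {poly R}) : derive1 (horner p) 0 = p`_1.
Proof. by rewrite -derivE horner_coef0 coef_deriv mulr1n. Qed.

Lemma coef1M (p q : {poly R}) : (p * q)`_1 = p`_0 * q`_1 + p`_1 * q`_0.
Proof. by rewrite coefM big_ord_recr big_ord1. Qed.

Lemma derive1_frobdot_quad m n c (A B C D G K : 'M[R]_(m, n)) :
  derive1 (fun t => c * frobdot (A + t *: B + t ^+ 2 *: C) (D + t *: G + t ^+ 2 *: K)) 0
  = c * (frobdot A G + frobdot B D).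
Proof.
pose quad (X Y Z : 'M[R]_(m, n)) i j := Poly [:: X i j; Y i j; Z i j].
have -> : (fun t => c * frobdot (A + t *: B + t ^+ 2 *: C) (D + t *: G + t ^+ 2 *: K))
    = horner (c *: \sum_i \sum_j quad A B C i j * quad D G K i j).
  apply/funext => t; rewrite hornerZ frobdotE horner_sum; congr (_ * _).
  apply: eq_bigr => i _; rewrite horner_sum; apply: eq_bigr => j _.
  by rewrite hornerM /quad !horner_Poly /= !mxE; congr (_ * _); ring.
rewrite derive1_horner0 coefZ !frobdotE !coef_sum -big_split /=; congr (_ * _).
apply: eq_bigr => i _; rewrite coef_sum -big_split /=; apply: eq_bigr => j _.
by rewrite coef1M /quad !coef_Poly.
Qed.

End QuadraticPath.

Lemma scalar_rowE (R : fieldType) N (L : 'rV[R]_N -> R) : scalar L ->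
  forall w, L w = \sum_i w 0 i * L (delta_mx 0 i).
Proof.
move=> L_lin w.
pose L' : {linear 'rV[R]_N -> R^o | *%R} := HB.pack L (GRing.isLinear.Build _ _ _ _ L L_lin).
rewrite {1}(row_sum_delta w) -[L _]/(L' _) linear_sum; apply: eq_bigr => i _.
by rewrite linearZ.
Qed.

Section FactorizationHessian.
Variable R : realType.

Lemma mulmx_trmx_eq0 m n (A : 'M[R]_(m, n)) : A *m A^T = 0 -> A = 0.
Proof. by move=> AA0; apply/eqP; rewrite -frobdot_eq0 /frobdot AA0 mxtrace0. Qed.

Lemma gram_unitmx d k (V : 'M[R]_(d, k)) : \rank V = k -> V^T *m V \in unitmx.
Proof.
move=> rkV; rewrite -row_free_unit -kermx_eq0; set K := kermx _.
have KVV : K *m (V^T *m V) = 0 := mulmx_ker _.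
have KV : K *m V^T = 0.
  by apply: mulmx_trmx_eq0; rewrite trmx_mul trmxK mulmxA -(mulmxA K) KVV mul0mx.
by rewrite -(mulmx_free_eq0 _ (_ : row_free V^T)) ?KV // /row_free mxrank_tr rkV.
Qed.

Lemma residual_eq0_full_rank d1 d2 k (M : 'M[R]_(d1, d2))
    (U : 'M[R]_(d1, k)) (V : 'M[R]_(d2, k)) :
  \rank M = k -> \rank U = k -> \rank V = k ->
  (U *m V^T - M) *m V = 0 -> U^T *m (U *m V^T - M) = 0 -> U *m V^T - M = 0.
Proof.
move=> rkM rkU rkV EV UE.
have MV : M *m V = U *m (V^T *m V).
  by move/eqP: EV; rewrite mulmxBl subr_eq0 -mulmxA => /eqP <-.
have UM : (U^T <= M^T)%MS.
  by rewrite -[U](mulmxK (gram_unitmx rkV)) -MV !trmx_mul mulmxA submxMl.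
have [X MUX] : exists X, M^T = X *m U^T.
  by apply/submxP; rewrite -(mxrank_leqif_sup UM).2 !mxrank_tr rkU rkM.
apply/eqP; rewrite -frobdot_eq0 {2}(_ : U *m V^T - M = U *m (V - X)^T).
  by rewrite frobdot_mull UE /frobdot mul0mx mxtrace0.
by rewrite -[M]trmxK MUX trmx_mul trmxK linearB /= mulmxBr.
Qed.

Lemma rank_defect_kernel d k (U : 'M[R]_(d, k)) : \rank U != k ->
  exists2 a : 'rV[R]_k, a != 0 & a *m U^T = 0.
Proof.
move=> rkU; exists (nz_row (kermx U^T)); last exact/sub_kermxP/nz_row_sub.
by rewrite nz_row_eq0 kermx_eq0 /row_free mxrank_tr.
Qed.

Lemma quadratic_lt0 (b c : R) : b != 0 -> 0 <= c -> exists s, 2 * (s * b) + s ^+ 2 * c < 0.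
Proof.
move=> b_neq0 c_ge0; set t := (c + 1)^-1.
have t_gt0 : 0 < t by rewrite invr_gt0; lra.
have tc : t * c = 1 - t by rewrite /t; field; lra.
have bb_gt0 : 0 < b ^+ 2 by rewrite exprn_even_gt0.
exists (- b * t).
have -> : 2 * (- b * t * b) + (- b * t) ^+ 2 * c = - (b ^+ 2 * t) * (2 - t * c) by ring.
by rewrite tc; have := mulr_gt0 bb_gt0 t_gt0; nra.
Qed.

Lemma frobdot_outer m n p (E : 'M[R]_(m, n)) (a b : 'rV[R]_p) i j :
  frobdot E ((delta_mx i 0 *m a) *m (delta_mx j 0 *m b)^T) = (a *m b^T) 0 0 * E i j.
Proof.
rewrite trmx_mul -!mulmxA (mulmxA a) {1}[a *m b^T]mx11_scalar mul_scalar_mx.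
by rewrite -scalemxAr trmx_delta mul_delta_mx frobdotZr frobdot_delta.
Qed.

Lemma mulmx_trmx00_neq0 p (a : 'rV[R]_p) : a != 0 -> (a *m a^T) 0 0 != 0.
Proof. by rewrite -frobdot_eq0 /frobdot /mxtrace big_ord1. Qed.

Definition mf_hessian_form d1 d2 k (M : 'M[R]_(d1, d2))
    (U dU : 'M[R]_(d1, k)) (V dV : 'M[R]_(d2, k)) : R :=
  2 * frobdot (U *m V^T - M) (dU *m dV^T)
  + frobdot (dU *m V^T + U *m dV^T) (dU *m V^T + U *m dV^T).

Lemma mf_hessian_form_tr d1 d2 k (M : 'M[R]_(d1, d2)) U dU (V dV : 'M[R]_(d2, k)) :
  mf_hessian_form M^T V dV U dU = mf_hessian_form M U dU V dV.
Proof.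
rewrite /mf_hessian_form -(frobdot_tr (U *m V^T - M)) -(frobdot_tr (dU *m V^T + _)).
by rewrite !linearD linearN /= !trmx_mul !trmxK [in RHS](addrC (V *m dU^T)).
Qed.

Lemma mf_hessian_form_lt0_ker d1 d2 k (M : 'M[R]_(d1, d2)) U (V : 'M[R]_(d2, k))
    (a : 'rV[R]_k) :
  a != 0 -> a *m U^T = 0 -> U *m V^T - M != 0 ->
  exists dU dV, mf_hessian_form M U dU V dV < 0.
Proof.
move=> a_neq0 aU /matrix0Pn[i [j Eij]].
pose eU := delta_mx i (0 : 'I_1) *m a; pose eV := delta_mx j (0 : 'I_1) *m a.
have UeV : U *m eV^T = 0.
  by rewrite trmx_mul mulmxA -[U *m a^T]trmxK trmx_mul trmxK aU trmx0 mul0mx.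
have [s s_neg] := quadratic_lt0 (mulf_neq0 (mulmx_trmx00_neq0 a_neq0) Eij)
  (frobdot_ge0 (eU *m V^T)).
exists (s *: eU), eV; rewrite /mf_hessian_form UeV addr0 -!scalemxAl.
by rewrite frobdotZr frobdot_outer frobdotZl frobdotZr [s * (s * _)]mulrA -expr2.
Qed.

Lemma mf_hessian_form_lt0 d1 d2 k (M : 'M[R]_(d1, d2)) U (V : 'M[R]_(d2, k)) :
  U *m V^T - M != 0 -> (\rank U != k) || (\rank V != k) ->
  exists dU dV, mf_hessian_form M U dU V dV < 0.
Proof.
move=> E_neq0 /orP[/rank_defect_kernel[a a_neq0 aU] | /rank_defect_kernel[a a_neq0 aV]].
  exact: mf_hessian_form_lt0_ker aU E_neq0.
have ET_neq0 : V *m U^T - M^T != 0.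
  by rewrite -[V]trmxK -trmx_mul -linearB trmx_eq0.
have [dV [dU neg]] := mf_hessian_form_lt0_ker a_neq0 aV ET_neq0.
by exists dU, dV; rewrite -mf_hessian_form_tr.
Qed.

End FactorizationHessian.

Section FactorizationObjective.
Variables (R : realType) (d1 d2 r : nat) (M : 'M[R]_(d1, d2)).
Local Notation N := (d1 * r + d2 * r)%N.
Local Notation f := (@fobj R d1 d2 r M).
Local Notation UU x := (@Uof R d1 d2 r x).
Local Notation VV x := (@Vof R d1 d2 r x).
Local Notation eb i := (@ebasis R N i).
Implicit Types x w a b : 'rV[R]_N.

Lemma UofD a b : UU (a + b) = UU a + UU b.
Proof. by rewrite /Uof !linearD. Qed.

Lemma UofZ c a : UU (c *: a) = c *: UU a.
Proof. by rewrite /Uof !linearZ. Qed.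

Lemma VofD a b : VV (a + b) = VV a + VV b.
Proof. by rewrite /Vof !linearD. Qed.

Lemma VofZ c a : VV (c *: a) = c *: VV a.
Proof. by rewrite /Vof !linearZ. Qed.

Lemma Uof_pack U V : UU (pack U V) = U.
Proof. by rewrite /Uof /pack row_mxKl mxvecK. Qed.

Lemma Vof_pack U V : VV (pack U V) = V.
Proof. by rewrite /Vof /pack row_mxKr mxvecK. Qed.

Definition residual x := UU x *m (VV x)^T - M.

Definition dprod x w := UU w *m (VV x)^T + UU x *m (VV w)^T.

Lemma dprodC a b : dprod a b = dprod b a.
Proof. exact: addrC. Qed.

Lemma dprodP x c a b : dprod x (c *: a + b) = c *: dprod x a + dprod x b.
Proof.
rewrite /dprod UofD VofD UofZ VofZ linearD linearZ /= mulmxDl !mulmxDr.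
rewrite -!scalemxAl -!scalemxAr.
by apply/matrixP => i j; rewrite !mxE; ring.
Qed.

Definition hess_bilin x a b :=
  frobdot (residual x) (dprod a b) + frobdot (dprod x a) (dprod x b).

Lemma residual_shift x w t :
  residual (x + t *: w) = residual x + t *: dprod x w + t ^+ 2 *: (UU w *m (VV w)^T).
Proof.
rewrite /residual /dprod UofD VofD UofZ VofZ linearD linearZ /= mulmxDl !mulmxDr.
rewrite -!scalemxAl -!scalemxAr scalerA -expr2 scalerDr.
by apply/matrixP => i j; rewrite !mxE; ring.
Qed.

(* The vanishing quadratic term matches the shape of [derive1_frobdot_quad]. *)
Lemma dprod_shift x v w t : dprod (x + t *: w) v
  = dprod x v + t *: dprod w v + t ^+ 2 *: 0.
Proof.
rewrite /dprod UofD VofD UofZ VofZ linearD linearZ /= mulmxDl !mulmxDr scaler0 addr0.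
rewrite -!scalemxAl -!scalemxAr.
by apply/matrixP => i j; rewrite !mxE; ring.
Qed.

Lemma pderiv_fobj x i : pderiv f x i = frobdot (residual x) (dprod x (eb i)).
Proof.
rewrite /pderiv /fobj.
under eq_fun do rewrite frob_sqr -/(residual _) residual_shift.
by rewrite derive1_frobdot_quad [frobdot (dprod _ _) _]frobdotC; field.
Qed.

Lemma hessian_fobjE x i j : hessian f x i j = hess_bilin x (eb i) (eb j).
Proof.
rewrite /hessian mxE /pderiv.
under eq_fun do
  rewrite -/(pderiv _ _ _) pderiv_fobj residual_shift dprod_shift -[frobdot _ _]mul1r.
by rewrite derive1_frobdot_quad mul1r /hess_bilin [frobdot (dprod x _) _]frobdotC dprodC.
Qed.

Lemma hess_bilinC x a b : hess_bilin x a b = hess_bilin x b a.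
Proof. by rewrite /hess_bilin dprodC [frobdot (dprod x a) _]frobdotC. Qed.

Lemma hess_bilin_scalar x b : scalar (hess_bilin x ^~ b).
Proof.
move=> c a1 a2 /=; rewrite /hess_bilin (dprodC (c *: a1 + a2)) !dprodP.
rewrite frobdotDr frobdotZr (frobdotDl (c *: _)) frobdotZl !(dprodC b); ring.
Qed.

Lemma hessian_fobj_form x w : (w *m hessian f x *m w^T) 0 0 = hess_bilin x w w.
Proof.
rewrite (scalar_rowE (hess_bilin_scalar x w)) mxE; apply: eq_bigr => i _.
rewrite hess_bilinC (scalar_rowE (hess_bilin_scalar x _)) !mxE mulr_sumr mulr_suml.
by apply: eq_bigr => j _; rewrite (hessian_fobjE x j i); ring.
Qed.

Lemma hessian_fobj_sym x : (hessian f x)^T = hessian f x.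
Proof. by apply/matrixP => i j; rewrite mxE !hessian_fobjE hess_bilinC. Qed.

Lemma stationary_fobj_orth x :
  stationary_point f x -> forall w, frobdot (residual x) (dprod x w) = 0.
Proof.
move=> x_stat w; have L_scalar : scalar (fun w => frobdot (residual x) (dprod x w)).
  by move=> c a b; rewrite dprodP frobdotDr frobdotZr.
rewrite (scalar_rowE L_scalar); apply: big1 => i _.
by move/rowP/(_ i): x_stat; rewrite !mxE pderiv_fobj => ->; rewrite mulr0.
Qed.

Lemma stationary_fobj_residual U V : stationary_point f (pack U V) ->
  (U *m V^T - M) *m V = 0 /\ U^T *m (U *m V^T - M) = 0.
Proof.
move=> /stationary_fobj_orth orth.
have resE : residual (pack U V) = U *m V^T - M by rewrite /residual Uof_pack Vof_pack.
split; apply/eqP; rewrite -frobdot_eq0.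
- have := orth (pack ((U *m V^T - M) *m V) 0).
  by rewrite resE /dprod !Uof_pack !Vof_pack trmx0 mulmx0 addr0 frobdot_mulr trmxK => ->.
- have := orth (pack 0 ((U *m V^T - M)^T *m U)).
  by rewrite resE /dprod !Uof_pack !Vof_pack mul0mx add0r trmx_mul trmxK frobdot_mull => ->.
Qed.

Lemma hessian_fobj_pack U V dU dV :
  (pack dU dV *m hessian f (pack U V) *m (pack dU dV)^T) 0 0 = mf_hessian_form M U dU V dV.
Proof.
rewrite hessian_fobj_form /hess_bilin /residual /dprod !Uof_pack !Vof_pack.
by rewrite /mf_hessian_form frobdotDr; ring.
Qed.

End FactorizationObjective.

Theorem lemma3p2 (R : realType) (d1 d2 r : nat) (Mstar : 'M[R]_(d1, d2))
  (eps : R) (U : 'M[R]_(d1, r)) (V : 'M[R]_(d2, r)) :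
  \rank Mstar = r ->
  0 < eps ->
  stationary_point (@fobj R d1 d2 r Mstar) (pack U V) ->
  frob (U^T *m U - V^T *m V) <= eps ->
  frob (U *m V^T - Mstar) <= eps \/ strict_saddle (@fobj R d1 d2 r Mstar) (pack U V).
Proof.
move=> rkM eps_gt0 UV_stat _.
have [E0 | E_neq0] := eqVneq (U *m V^T - Mstar) 0.
  by left; rewrite E0 frob0 ltW.
right; split => //.
have [|dU [dV neg]] := mf_hessian_form_lt0 E_neq0.
  rewrite -negb_and; apply: contra E_neq0 => /andP[/eqP rkU /eqP rkV].
  have [EV UE] := stationary_fobj_residual UV_stat.
  by apply/eqP/(residual_eq0_full_rank rkM).
apply: (@symmetric_form_lt0_eigenvalue _ _ _ (pack dU dV)).
  exact: hessian_fobj_sym.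
by rewrite hessian_fobj_pack.
Qed.
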